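(* (1) There exist a hedonic diversity game in which all agents have strict preferences and an initial partition $\pi_0$ such that no finite sequence of IS deviations starting from $\pi_0$ ends in an individually stable partition. (2) The same holds for some hedonic diversity game in which all agents have naturally single-peaked preferences (with indifferences allowed) and some initial partition.
   Context: A hedonic diversity game (HDG) has agent set $N=R\cup B$ partitioned into red agents $R$ and blue agents $B$, $|N|=n$. Each agent $i$ has a weak order $\succsim_i^F$ over fractions $\{p/q: p\in\{0,\dots,|R|\},q\in[n]\}$, and evaluates a coalition $C\ni i$ by the fraction $|R\cap C|/|C|$. Strict: the orders are linear. Naturally single-peaked: for each agent $i$ and fractions $x,y,z$ with $x>y>z$ or $z>y>x$, $x\succ_i^F y$ implies $y\succsim_i^F z$. An IS deviation of agent $i$ from partition $\pi$ to $\pi'$ is a move of $i$ alone from $\pi(i)$ into another coalition of $\pi$ or into a new singleton such that $\pi'(i)\succ_i\pi(i)$ and $\pi'(j)\succsim_j\pi(j)$ for all $j\in\pi'(i)\setminus\{i\}$. A partition is individually stable (IS) if no IS deviation is possible from it. *)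

From mathcomp Require Import all_boot all_order all_algebra.
Set Implicit Arguments. Unset Strict Implicit. Unset Printing Implicit Defensive.
Import Order.TTheory GRing.Theory Num.Theory.
Local Open Scope ring_scope.

(* Agents are 'I_n; [red i] says agent i is red (otherwise blue).
   [pref i x y] means agent i weakly prefers fraction x to fraction y. *)

Definition nred (n : nat) (red : 'I_n -> bool) : nat := #|[set i | red i]|.

Definition is_frac (n : nat) (red : 'I_n -> bool) (x : rat) : Prop :=
  exists p q : nat, (p <= nred red)%N /\ (1 <= q <= n)%N /\ x = p%:R / q%:R.

Definition weak_order_on (F : rat -> Prop) (r : rat -> rat -> bool) : Prop :=
  (forall x y, F x -> F y -> r x y || r y x) /\
  (forall x y z, F x -> F y -> F z -> r x y -> r y z -> r x z).

Definition strict_pref (r : rat -> rat -> bool) (x y : rat) : bool :=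
  r x y && ~~ r y x.

Definition linear_on (F : rat -> Prop) (r : rat -> rat -> bool) : Prop :=
  weak_order_on F r /\ (forall x y, F x -> F y -> r x y -> r y x -> x = y).

Definition nat_single_peaked_on (F : rat -> Prop) (r : rat -> rat -> bool) : Prop :=
  forall x y z, F x -> F y -> F z ->
    ((x > y) && (y > z) || (z > y) && (y > x)) ->
    strict_pref r x y -> r y z.

Definition HDG (n : nat) (red : 'I_n -> bool) (pref : 'I_n -> rat -> rat -> bool) : Prop :=
  forall i, weak_order_on (is_frac red) (pref i).

Definition strict_HDG n (red : 'I_n -> bool) (pref : 'I_n -> rat -> rat -> bool) : Prop :=
  forall i, linear_on (is_frac red) (pref i).

Definition nsp_HDG n (red : 'I_n -> bool) (pref : 'I_n -> rat -> rat -> bool) : Prop :=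
  HDG red pref /\ forall i, nat_single_peaked_on (is_frac red) (pref i).

Definition red_frac n (red : 'I_n -> bool) (C : {set 'I_n}) : rat :=
  (#|[set j in C | red j]|)%:R / (#|C|)%:R.

(* partition obtained when agent i leaves its coalition and joins T
   (T = set0 means: forms a new singleton coalition) *)
Definition move_agent n (P : {set {set 'I_n}}) (i : 'I_n) (T : {set 'I_n})
  : {set {set 'I_n}} :=
  let S := pblock P i in
  ((P :\ S :\ T) :|: [set i |: T]) :|:
  (if S :\ i == set0 then set0 else [set S :\ i]).

Definition IS_deviation n (red : 'I_n -> bool) (pref : 'I_n -> rat -> rat -> bool) (P P' : {set {set 'I_n}}) : Prop :=
  exists (i : 'I_n) (T : {set 'I_n}),
    (T == set0 \/ (T \in P /\ T != pblock P i)) /\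
    strict_pref (pref i) (red_frac red (i |: T)) (red_frac red (pblock P i)) /\
    (forall j, j \in T -> pref j (red_frac red (i |: T)) (red_frac red T)) /\
    P' = move_agent P i T.

Definition individually_stable n (red : 'I_n -> bool) (pref : 'I_n -> rat -> rat -> bool) (P : {set {set 'I_n}}) : Prop :=
  forall P', ~ IS_deviation red pref P P'.

Inductive IS_reachable n (red : 'I_n -> bool) (pref : 'I_n -> rat -> rat -> bool) (P : {set {set 'I_n}})
  : {set {set 'I_n}} -> Prop :=
| IS_reach_refl : IS_reachable red pref P P
| IS_reach_step P1 P2 : IS_reachable red pref P P1 ->
    IS_deviation red pref P1 P2 -> IS_reachable red pref P P2.

(* Each game comes with a trap: a finite list of partitions, containing the
   initial one, such that every partition in it admits an IS deviation and
   every IS deviation from it leads back into the list.  By induction along a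
   deviation sequence every reachable partition lies in the trap, so none is
   individually stable.  Partitions are encoded as lists of lists of agent
   indices, which makes both properties of a trap decidable by computation.
   Strict preferences are explicit rankings of the feasible fractions.
   Naturally single-peaked preferences come from utilities
   x |-> #{a in A | a <= x} - #{b in B | b <= x} with A lying below B: such a
   utility can only increase before the least point of B and only decrease
   from it on. *)

From mathcomp Require Import all_boot all_order all_algebra.
Set Implicit Arguments. Unset Strict Implicit. Unset Printing Implicit Defensive.
Import Order.TTheory GRing.Theory Num.Theory.
Local Open Scope ring_scope.

Section OrdPartitions.
Variable n : nat.

Lemma val_in_iota (i : 'I_n) : val i \in iota 0 n.
Proof. by rewrite mem_iota add0n ltn_ord. Qed.

Definition ord_set (l : seq nat) : {set 'I_n} := [set i | val i \in l].

Lemma in_ord_set l i : (i \in ord_set l) = (val i \in l).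
Proof. by rewrite inE. Qed.

Definition eq_ord_set (l1 l2 : seq nat) : bool :=
  all (fun k => (k \in l1) == (k \in l2)) (iota 0 n).

Lemma eq_ord_setP l1 l2 : reflect (ord_set l1 = ord_set l2) (eq_ord_set l1 l2).
Proof.
apply: (iffP allP) => [E | E k].
- by apply/setP => i; rewrite !in_ord_set; apply/eqP/E/val_in_iota.
- rewrite mem_iota add0n => lt_kn; have := congr1 (fun A : {set 'I_n} => Ordinal lt_kn \in A) E.
  by rewrite !in_ord_set => ->.
Qed.

Lemma ord_set_nil : ord_set [::] = set0.
Proof. by apply/setP => i; rewrite !inE. Qed.

Lemma setU1_ord_set (i : 'I_n) l : i |: ord_set l = ord_set (val i :: l).
Proof. by apply/setP => j; rewrite !inE. Qed.

Lemma setD1_ord_set (i : 'I_n) l : ord_set l :\ i = ord_set [seq k <- l | k != val i].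
Proof. by apply/setP => j; rewrite !inE mem_filter andbC. Qed.

Lemma card_set_val (q : pred nat) : #|[set i : 'I_n | q (val i)]| = count q (iota 0 n).
Proof.
by rewrite cardsE cardE -(size_map val) /enum_mem -enumT /= -filter_map val_enum_ord size_filter.
Qed.

Definition red_frac_seq (redN : pred nat) (l : seq nat) : rat :=
  (count (fun k => (k \in l) && redN k) (iota 0 n))%:R / (count (fun k => k \in l) (iota 0 n))%:R.

Lemma red_frac_ord_set redN l :
  red_frac (fun i : 'I_n => redN (val i)) (ord_set l) = red_frac_seq redN l.
Proof.
rewrite /red_frac /red_frac_seq -!card_set_val.
by congr (_%:R / _%:R); apply: eq_card => i; rewrite !inE.
Qed.

Definition block_seq (L : seq (seq nat)) (k : nat) : seq nat :=
  nth [::] L (find (fun l => k \in l) L).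

Definition is_partition_seq (L : seq (seq nat)) : bool :=
  all (fun l => ~~ eq_ord_set l [::]) L &&
  all (fun k => has (fun l => k \in l) L &&
                all (fun l => (k \in l) ==> eq_ord_set l (block_seq L k)) L) (iota 0 n).

Definition ord_partition (L : seq (seq nat)) : {set {set 'I_n}} := [set B in map ord_set L].

Lemma in_ord_partition L B : (B \in ord_partition L) = (B \in map ord_set L).
Proof. by rewrite inE. Qed.

Lemma block_seqP L (i : 'I_n) : is_partition_seq L ->
  [/\ block_seq L (val i) \in L, val i \in block_seq L (val i) &
      forall l, l \in L -> val i \in l -> ord_set l = ord_set (block_seq L (val i))].
Proof.
case/andP=> _ /allP /(_ (val i) (val_in_iota i)) /andP [hasL /allP blockL].
split.
- by rewrite /block_seq mem_nth // -has_find.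
- exact: (nth_find [::] hasL).
- by move=> l lL il; apply/eq_ord_setP; move: (blockL l lL); rewrite il.
Qed.

Lemma trivIset_ord_partition L : is_partition_seq L -> trivIset (ord_partition L).
Proof.
move=> partL; apply/trivIsetP => A B; rewrite !in_ord_partition.
move=> /mapP [a aL ->] /mapP [b bL ->] neq_ab; rewrite -setI_eq0; apply/set0Pn => -[i].
rewrite !inE => /andP [ia ib]; have [_ _ uniq_block] := block_seqP i partL.
by move: neq_ab; rewrite (uniq_block _ aL ia) (uniq_block _ bL ib) eqxx.
Qed.

Lemma pblock_ord_partition L (i : 'I_n) : is_partition_seq L ->
  pblock (ord_partition L) i = ord_set (block_seq L (val i)).
Proof.
move=> partL; have [blockL i_block _] := block_seqP i partL.
apply: def_pblock; first exact: trivIset_ord_partition.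
- by rewrite in_ord_partition map_f.
- by rewrite in_ord_set.
Qed.

Lemma partition_ord_partition L : is_partition_seq L -> partition (ord_partition L) [set: 'I_n].
Proof.
move=> partL; apply/and3P; split; last 1 first.
- rewrite in_ord_partition; apply/mapP => -[l lL /esym].
  rewrite -ord_set_nil => /eq_ord_setP eq_l_nil.
  by case/andP: partL => /allP /(_ l lL); rewrite eq_l_nil.
- apply/eqP/setP => i; rewrite inE; apply/bigcupP.
  have [blockL i_block _] := block_seqP i partL.
  by exists (ord_set (block_seq L (val i))); rewrite ?in_ord_partition ?map_f ?in_ord_set.
- exact: trivIset_ord_partition.
Qed.

Definition move_agent_seq (L : seq (seq nat)) (i : nat) (t : seq nat) : seq (seq nat) :=
  let S := block_seq L i in
  let S' := [seq k <- S | k != i] in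
  [seq l <- L | ~~ eq_ord_set l S && ~~ eq_ord_set l t] ++
  (i :: t) :: (if eq_ord_set S' [::] then [::] else [:: S']).

Lemma map_ord_set_filter L S t B :
  (B \in map ord_set [seq l <- L | ~~ eq_ord_set l S && ~~ eq_ord_set l t]) =
  [&& B != ord_set t, B != ord_set S & B \in map ord_set L].
Proof.
apply/mapP/and3P => [[l] | [neq_t neq_S /mapP [l lL eq_B]]]; last subst B.
- rewrite mem_filter => /andP [/andP [/eq_ord_setP neq_S /eq_ord_setP neq_t] lL] ->.
  by split; rewrite ?map_f //; apply/eqP.
- exists l => //; rewrite mem_filter lL andbT.
  by apply/andP; split; apply/eq_ord_setP; apply/eqP.
Qed.

Lemma move_agent_ord_partition L (i : 'I_n) t : is_partition_seq L ->
  move_agent (ord_partition L) i (ord_set t) = ord_partition (move_agent_seq L (val i) t).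
Proof.
move=> partL; rewrite /move_agent pblock_ord_partition //; apply/setP => B.
rewrite /move_agent_seq !inE map_cat mem_cat map_ord_set_filter /= in_cons.
rewrite setU1_ord_set setD1_ord_set -ord_set_nil.
by case: eq_ord_setP => [-> | /eqP /negbTE ->]; rewrite ?eqxx !inE /= ?orbF ?orbA.
Qed.

Definition eq_ord_partition (L1 L2 : seq (seq nat)) : bool :=
  all (fun l => has (eq_ord_set l) L2) L1 && all (fun l => has (eq_ord_set l) L1) L2.

Lemma eq_ord_partitionP L1 L2 :
  reflect (ord_partition L1 = ord_partition L2) (eq_ord_partition L1 L2).
Proof.
have sub_ord_partition L L' : all (fun l => has (eq_ord_set l) L') L ->
    {subset ord_partition L <= ord_partition L'}.
  move=> /allP subL B; rewrite !in_ord_partition => /mapP [l /subL /hasP [l' l'L]].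
  by move=> /eq_ord_setP -> ->; rewrite map_f.
have has_ord_partition L L' l : l \in L -> ord_partition L = ord_partition L' ->
    has (eq_ord_set l) L'.
  move=> lL eqLL'; have := map_f ord_set lL; rewrite -in_ord_partition eqLL' in_ord_partition.
  by case/mapP => l' l'L eq_l; apply/hasP; exists l'; last exact/eq_ord_setP.
apply: (iffP andP) => [[sub12 sub21] | eq12].
- by apply/setP/subset_eqP/andP; split; apply/subsetP; apply: sub_ord_partition.
- by split; apply/allP => l lL; apply: has_ord_partition lL _.
Qed.

End OrdPartitions.

Arguments ord_set {n} l.
Arguments ord_partition {n} L.

Section Certificate.
Variables (n : nat) (redN : pred nat) (prefN : nat -> rat -> rat -> bool).
Local Notation red := (fun i : 'I_n => redN (val i)).
Local Notation pref := (fun i : 'I_n => prefN (val i)).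
Local Notation frac := (red_frac_seq n redN).

(* [::] stands for leaving to form a new singleton coalition. *)
Definition IS_targets (L : seq (seq nat)) (i : nat) : seq (seq nat) :=
  [::] :: [seq t <- L | ~~ eq_ord_set n t (block_seq L i)].

Definition IS_moveb (L : seq (seq nat)) (i : nat) (t : seq nat) : bool :=
  strict_pref (prefN i) (frac (i :: t)) (frac (block_seq L i)) &&
  all (fun k => (k \in t) ==> prefN k (frac (i :: t)) (frac t)) (iota 0 n).

Lemma IS_deviation_ord_partition L P : is_partition_seq n L ->
  IS_deviation red pref (ord_partition L) P <->
  exists i : 'I_n, exists2 t, t \in IS_targets L (val i) &
    IS_moveb L (val i) t /\ P = ord_partition (move_agent_seq n L (val i) t).
Proof.
move=> partL; split => [[i [T [target [better [welcome ->]]]]] | [i [t target [moveb ->]]]].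
- have [t t_target eq_T] : exists2 t, t \in IS_targets L (val i) & T = ord_set t.
    case: target => [/eqP -> | [TP neq_T]]; first by exists [::]; rewrite ?mem_head ?ord_set_nil.
    move: TP neq_T; rewrite in_ord_partition pblock_ord_partition // => /mapP [t tL ->] neq_t.
    by exists t => //; rewrite inE mem_filter tL andbT; apply/orP; right; apply/eq_ord_setP/eqP.
  subst T; exists i; exists t => //; split; last exact: move_agent_ord_partition.
  apply/andP; split.
    by move: better; rewrite setU1_ord_set pblock_ord_partition // !red_frac_ord_set.
  apply/allP => k; rewrite mem_iota add0n => lt_kn; apply/implyP => kt.
  by have := welcome (Ordinal lt_kn); rewrite in_ord_set setU1_ord_set !red_frac_ord_set; apply.
- case/andP: moveb => better /allP welcome.
  exists i, (ord_set t); split; last split; last split.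
  + move: target; rewrite inE => /predU1P [-> | ]; first by left; rewrite ord_set_nil.
    rewrite mem_filter => /andP [neq_t tL]; right; split; first by rewrite in_ord_partition map_f.
    by rewrite pblock_ord_partition //; apply/eqP/eq_ord_setP.
  + by rewrite setU1_ord_set pblock_ord_partition // !red_frac_ord_set.
  + move=> j; rewrite in_ord_set setU1_ord_set !red_frac_ord_set => jt.
    by have /implyP := welcome (val j) (val_in_iota j); apply.
  + by rewrite move_agent_ord_partition.
Qed.

Definition IS_trap (fam : seq (seq (seq nat))) : bool :=
  all (fun L => [&& is_partition_seq n L,
    all (fun i => all (fun t => IS_moveb L i t ==>
           has (eq_ord_partition n (move_agent_seq n L i t)) fam) (IS_targets L i)) (iota 0 n) &
    has (fun i => has (IS_moveb L i) (IS_targets L i)) (iota 0 n)]) fam.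

Section Trap.
Variable fam : seq (seq (seq nat)).
Hypothesis trap : IS_trap fam.

Lemma IS_trap_partition L : L \in fam -> is_partition_seq n L.
Proof. by move/(allP trap)/and3P => []. Qed.

Lemma IS_trap_deviation L P : L \in fam -> IS_deviation red pref (ord_partition L) P ->
  exists2 L', L' \in fam & P = ord_partition L'.
Proof.
move=> Lfam; have partL := IS_trap_partition Lfam.
case/(IS_deviation_ord_partition _ partL) => i [t target [moveb ->]].
have /and3P [_ /allP closed _] := allP trap L Lfam.
have /allP /(_ t target) := closed (val i) (val_in_iota i).
by rewrite moveb => /hasP [L' L'fam /eq_ord_partitionP ->]; exists L'.
Qed.

Lemma IS_trap_reachable L0 P : L0 \in fam ->
  IS_reachable red pref (ord_partition L0) P -> exists2 L, L \in fam & P = ord_partition L.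
Proof.
move=> L0fam; elim=> [|P1 P2 _ [L Lfam ->]]; first by exists L0.
exact: IS_trap_deviation.
Qed.

Lemma IS_trap_unstable L : L \in fam -> ~ individually_stable red pref (ord_partition L).
Proof.
move=> Lfam stable; have /and3P [partL _ /hasP [k]] := allP trap L Lfam.
rewrite mem_iota add0n => lt_kn /hasP [t target moveb].
apply: (stable (ord_partition (move_agent_seq n L k t))).
by apply/IS_deviation_ord_partition => //; exists (Ordinal lt_kn); exists t.
Qed.

Lemma IS_trap_game L0 : L0 \in fam ->
  partition (ord_partition L0) [set: 'I_n] /\
  forall P, IS_reachable red pref (ord_partition L0) P -> ~ individually_stable red pref P.
Proof.
move=> L0fam; split; first exact/partition_ord_partition/IS_trap_partition.
by move=> P /(IS_trap_reachable L0fam) [L Lfam ->]; apply: IS_trap_unstable.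
Qed.

End Trap.
End Certificate.

Definition rank_pref (rank : rat -> nat) (x y : rat) : bool :=
  (rank x < rank y)%N || (rank x == rank y) && (x <= y).

Lemma rank_pref_linear rank (F : rat -> Prop) : linear_on F (rank_pref rank).
Proof.
rewrite /rank_pref; split; first split.
- by move=> x y _ _; case: ltngtP; rewrite ?le_total.
- move=> x y z _ _ _; case: ltngtP => // [lt_xy _ | /eqP eq_xy le_xy];
    case: ltngtP => // [lt_yz _ | /eqP eq_yz le_yz].
  + by rewrite (ltn_trans lt_xy lt_yz).
  + by rewrite -(eqP eq_yz) lt_xy.
  + by rewrite (eqP eq_xy) lt_yz.
  + by rewrite (eqP eq_xy) eq_yz (le_trans le_xy le_yz) orbT.
- move=> x y _ _; case: ltngtP => //= _ le_xy le_yx.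
  by apply/le_anti; rewrite le_xy le_yx.
Qed.

Section UtilityPreferences.
Variables (d : Order.disp_t) (T : orderType d).

Definition util_pref (u : rat -> T) (x y : rat) : bool := (u y <= u x)%O.

Definition unimodal (u : rat -> T) : Prop :=
  forall y, (forall x z, y <= x -> x <= z -> (u z <= u x)%O) \/
            (forall x z, x <= z -> z <= y -> (u x <= u z)%O).

Lemma util_pref_weak u (F : rat -> Prop) : weak_order_on F (util_pref u).
Proof.
split=> [x y _ _ | x y z _ _ _ le_yx le_zy]; first exact: le_total.
exact: le_trans le_zy le_yx.
Qed.

Lemma util_pref_single_peaked u (F : rat -> Prop) :
  unimodal u -> nat_single_peaked_on F (util_pref u).
Proof.
move=> unimod x y z _ _ _ between; rewrite /strict_pref /util_pref => /andP [_].
rewrite -ltNge => lt_yx.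
case: (unimod y) => [decr | incr]; case/orP: between => /andP [lt1 lt2].
- by rewrite ltNge (decr y x (lexx y) (ltW lt1)) in lt_yx.
- exact: decr y z (lexx y) (ltW lt1).
- exact: incr z y (ltW lt2) (lexx y).
- by rewrite ltNge (incr x y (ltW lt2) (lexx y)) in lt_yx.
Qed.

End UtilityPreferences.

Definition count_le (A : seq rat) (x : rat) : int := (count (<= x) A)%:Z.

Definition step_utility (A B : seq rat) (x : rat) : int := count_le A x - count_le B x.

Lemma count_le_mono A : {homo count_le A : x y / x <= y}.
Proof.
move=> x y le_xy; rewrite lez_nat; apply: sub_count => a /= le_ax; exact: le_trans le_xy.
Qed.

Lemma step_utility_unimodal A B : all (fun a => all (>= a) B) A -> unimodal (step_utility A B).
Proof.
move=> /allP below y; rewrite /step_utility.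
case: (boolP (has (<= y) B)) => [/hasP [b bB le_by] | /hasPn above]; [left | right].
- have full w : y <= w -> count_le A w = (size A)%:Z.
    move=> le_yw; congr Posz; apply/eqP; rewrite -all_count; apply/allP => a aA /=.
    exact: le_trans (allP (below a aA) b bB) (le_trans le_by le_yw).
  move=> x z le_yx le_xz; rewrite !full ?(le_trans le_yx) //.
  by rewrite lerD2l lerN2 count_le_mono.
- have empty w : w <= y -> count_le B w = 0.
    move=> le_wy; congr Posz; apply/eqP; rewrite -leqn0 leqNgt -has_count; apply/hasP => -[b bB le_bw].
    by have := above b bB; rewrite /= (le_trans le_bw le_wy).
  move=> x z le_xz le_zy; rewrite !empty ?(le_trans le_xz) // !subr0.
  exact: count_le_mono.
Qed.

Definition ratio (p q : nat) : rat := p%:R / q%:R.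

Local Open Scope nat_scope.

Definition redS (k : nat) : bool := k < 4.

(* Agent k ranks all 18 feasible fractions p/q (p <= 4, q <= 8), best first. *)
Definition rankS (k : nat) : seq rat :=
  match k with
  | 0 => [:: ratio 1 3; ratio 1 2; ratio 1 1; ratio 4 7; ratio 0 1; ratio 3 5; ratio 3 4; ratio 1 6; ratio 2 5; ratio 3 7; ratio 4 5; ratio 2 3; ratio 3 8; ratio 1 8; ratio 1 4; ratio 2 7; ratio 1 7; ratio 1 5]
  | 1 => [:: ratio 1 5; ratio 1 4; ratio 1 3; ratio 4 5; ratio 3 4; ratio 3 5; ratio 1 8; ratio 2 7; ratio 2 5; ratio 1 2; ratio 2 3; ratio 0 1; ratio 3 7; ratio 3 8; ratio 4 7; ratio 1 7; ratio 1 6; ratio 1 1]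
  | 2 => [:: ratio 2 3; ratio 1 1; ratio 1 7; ratio 2 7; ratio 0 1; ratio 3 7; ratio 1 3; ratio 1 6; ratio 3 4; ratio 1 4; ratio 2 5; ratio 4 7; ratio 1 2; ratio 3 5; ratio 4 5; ratio 1 8; ratio 3 8; ratio 1 5]
  | 3 => [:: ratio 2 3; ratio 1 1; ratio 1 4; ratio 0 1; ratio 2 7; ratio 4 7; ratio 1 8; ratio 1 7; ratio 3 4; ratio 3 5; ratio 4 5; ratio 1 5; ratio 1 3; ratio 1 6; ratio 1 2; ratio 3 8; ratio 3 7; ratio 2 5]
  | 4 => [:: ratio 1 5; ratio 1 4; ratio 1 3; ratio 3 7; ratio 1 8; ratio 4 5; ratio 1 1; ratio 1 7; ratio 3 4; ratio 1 6; ratio 3 5; ratio 2 3; ratio 4 7; ratio 1 2; ratio 2 5; ratio 2 7; ratio 3 8; ratio 0 1]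
  | 5 => [:: ratio 1 5; ratio 1 4; ratio 1 3; ratio 1 6; ratio 3 8; ratio 2 5; ratio 2 3; ratio 4 5; ratio 3 7; ratio 4 7; ratio 1 1; ratio 1 2; ratio 1 7; ratio 2 7; ratio 1 8; ratio 3 5; ratio 3 4; ratio 0 1]
  | 6 => [:: ratio 1 5; ratio 1 1; ratio 2 3; ratio 1 3; ratio 1 2; ratio 1 4; ratio 2 7; ratio 2 5; ratio 3 8; ratio 3 5; ratio 1 8; ratio 3 7; ratio 1 6; ratio 3 4; ratio 4 7; ratio 4 5; ratio 1 7; ratio 0 1]
  | _ => [:: ratio 1 3; ratio 2 3; ratio 1 5; ratio 1 4; ratio 1 1; ratio 1 2; ratio 4 5; ratio 1 6; ratio 3 8; ratio 1 8; ratio 1 7; ratio 3 7; ratio 3 5; ratio 2 5; ratio 4 7; ratio 3 4; ratio 2 7; ratio 0 1]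
  end.
Definition prefS (k : nat) : rat -> rat -> bool := rank_pref (index^~ (rankS k)).

Definition trapS : seq (seq (seq nat)) :=
  [:: [:: [:: 2;3]; [:: 1;4;5]; [:: 0;6;7]];
      [:: [:: 1;4;5]; [:: 2;3;6]; [:: 0;7]];
      [:: [:: 0]; [:: 2;3;6]; [:: 1;4;5;7]];
      [:: [:: 0]; [:: 2;3]; [:: 1;4;5;6;7]];
      [:: [:: 0]; [:: 1;4;5;6]; [:: 2;3;7]];
      [:: [:: 1;4;5]; [:: 0;6]; [:: 2;3;7]]].

Definition redSP (k : nat) : bool := k < 3.
Definition lowSP (k : nat) : seq rat :=
  if k == 2 then [:: ratio 1 5; ratio 1 3; ratio 2 5; ratio 1 2; ratio 2 3]
  else if k == 8 then nseq 10 (ratio 1 9) else [::].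
Definition highSP (k : nat) : seq rat :=
  if k == 2 then nseq 10 (ratio 1 1)
  else if k == 8 then [:: ratio 1 4; ratio 1 3; ratio 1 1] else [::].
Definition prefSP (k : nat) : rat -> rat -> bool :=
  util_pref (step_utility (lowSP k) (highSP k)).

Definition trapSP : seq (seq (seq nat)) :=
  [:: [:: [:: 1]; [:: 0;2;3;4]; [:: 5;6;7;8]];
      [:: [:: 0;2;3;4]; [:: 5;6;7]; [:: 1;8]];
      [:: [:: 0;3;4]; [:: 5;6;7]; [:: 1;2;8]];
      [:: [:: 1;2]; [:: 5;6;7]; [:: 0;3;4;8]];
      [:: [:: 1]; [:: 2;5;6;7]; [:: 0;3;4;8]];
      [:: [:: 1]; [:: 0;3;4]; [:: 2;5;6;7;8]]].

Local Open Scope ring_scope.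

Lemma IS_trap_S : IS_trap 8%N redS prefS trapS.
Proof. by vm_compute. Qed.

Lemma IS_trap_SP : IS_trap 9%N redSP prefSP trapSP.
Proof. by vm_compute. Qed.

Lemma low_below_high k : all (fun a => all (>= a) (highSP k)) (lowSP k).
Proof. by rewrite /lowSP /highSP; case: (k == 2); last case: (k == 8); vm_compute. Qed.

Theorem proposition4p3 :
  (exists (n : nat) (red : 'I_n -> bool) (pref : 'I_n -> rat -> rat -> bool)
          (P0 : {set {set 'I_n}}),
     strict_HDG red pref /\ partition P0 [set: 'I_n] /\
     forall P, IS_reachable red pref P0 P -> ~ individually_stable red pref P) /\
  (exists (n : nat) (red : 'I_n -> bool) (pref : 'I_n -> rat -> rat -> bool)
          (P0 : {set {set 'I_n}}),
     nsp_HDG red pref /\ partition P0 [set: 'I_n] /\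
     forall P, IS_reachable red pref P0 P -> ~ individually_stable red pref P).
Proof.
split.
- exists 8%N, (fun i : 'I_8 => redS (val i)), (fun i : 'I_8 => prefS (val i)),
    (ord_partition (head [::] trapS)).
  split; first by move=> i; apply: rank_pref_linear.
  apply: (IS_trap_game IS_trap_S); exact: mem_head.
- exists 9%N, (fun i : 'I_9 => redSP (val i)), (fun i : 'I_9 => prefSP (val i)),
    (ord_partition (head [::] trapSP)).
  split; first split=> i.
  + exact: util_pref_weak.
  + exact/util_pref_single_peaked/step_utility_unimodal/low_below_high.
  apply: (IS_trap_game IS_trap_SP); exact: mem_head.
Qed.
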